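(* At any point during the execution of $\mathit{find\_ap\_set}$, let $t$ be an odd vertex whose even mate $t'$ is completely scanned, and let $s$ be an odd descendant of $t$ in the search structure. Then after any later blossom step that makes $s$ even, $s$ and $t$ belong to the same blossom.
   Context: Let $H$ be a finite undirected graph with a matching $M_H$ (free vertices, $\mathit{mate}$, alternating and augmenting paths as usual). The procedure $\mathit{find\_ap\_set}$ maintains a search structure $S$ (a forest of alternating trees whose nodes are odd vertices and blossoms = sets of even vertices with a base; $b(x)$ denotes the base of the blossom containing an even vertex $x$) and a set $\mathit{CP}$ of vertex-disjoint augmenting paths, both initially empty. For each free vertex $f$ in turn: if $f$ is not on a path of $\mathit{CP}$, add $f$ to $S$ as the root of a new tree (a trivial even blossom) and call $\mathit{find\_ap}(f)$. The recursive call $\mathit{find\_ap}(x)$, for $x$ even, scans each non-matching edge $xy$ in turn: if $y\notin S$ and $y$ is free, add $xy$ to $S$, add the path formed by the canonical path of $x$ followed by $y$ to $\mathit{CP}$, and terminate every currently executing call of $\mathit{find\_ap}$ (the outer loop then continues with the next free vertex); if $y\notin S$ and $y$ is matched (grow step), add $y$ as odd child of $b(x)$ and $y'=\mathit{mate}(y)$ as even child of $y$, and call $\mathit{find\_ap}(y')$; if $y\in S$ and $b(y)$ is even and a proper descendant of $b(x)$ in $S$ (blossom step), let $u_1,\dots,u_k$ be the odd vertices on the tree path from $b(x)$ to $b(y)$ with $u_1$ closest to $b(x)$, merge all blossoms and odd vertices on this path into one blossom with base $b(x)$ (so $u_1,\dots,u_k$ become even), and call $\mathit{find\_ap}(u_1),\dots,\mathit{find\_ap}(u_k)$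 in this order; otherwise do nothing. Vertices in $S$ remain in $S$ between trees. An even vertex $x$ is completely scanned if $\mathit{find\_ap}(x)$ has been called and was not terminated prematurely (so all non-matching edges at $x$ have been scanned). *)

From HB Require Import structures.
From mathcomp Require Import all_boot.
Set Implicit Arguments. Unset Strict Implicit. Unset Printing Implicit Defensive.

Inductive lbl := Out | Odd | Even.
Definition lbl_eqb (a b : lbl) :=
  match a, b with Out, Out | Odd, Odd | Even, Even => true | _, _ => false end.
Lemma lbl_eqP : Equality.axiom lbl_eqb.
Proof. by case; case; constructor. Qed.
HB.instance Definition _ := hasDecEq.Build lbl lbl_eqP.

(* Stack frames of the recursion: a pending call find_ap(v), or an
   executing call find_ap(v) having already scanned the edges v y, y in sc. *)
Inductive frame (T : finType) := FCall of T | FScan of T & {set T}.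
Arguments FCall {T}.

Record state (T : finType) := State {
  lab  : T -> lbl;           (* Out = not in S, Odd, Even *)
  base : T -> T;             (* b(x) for even x *)
  par  : T -> option T;      (* odd y: the even x it was grown from;
                                even child y' : its odd parent y; roots: None *)
  stk  : seq (frame T);      (* call stack, top first *)
  todo : {set T};            (* free vertices not yet handled by the outer loop *)
  cpf  : {set T};            (* free vertices lying on a path of CP *)
  dn   : {set T};            (* completely scanned vertices *)
  cur  : option T            (* root of the tree currently grown *)
}.

Definition upd (T : eqType) (U : Type) (f : T -> U) (x : T) (u : U) :=
  fun z => if z == x then u else f z.

Section Algo.
Variables (T : finType) (e : rel T) (mate : T -> option T).

Definition free (x : T) := mate x == None.
Definition nonmatch (x y : T) := e x y && (mate x != Some y).

(* Nodes of the search forest: (false, y) = odd vertex y,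
   (true, z) = blossom with base z. *)
Definition node_of (s : state T) (v : T) : bool * T :=
  if lab s v == Odd then (false, v) else (true, base s v).

Definition pnode (s : state T) (n : bool * T) : option (bool * T) :=
  omap (node_of s) (par s n.2).

(* prel s n m : m is the parent of n; connect (prel s) n a : a is an ancestor of n
   (reflexive), i.e. n is a descendant of a. *)
Definition prel (s : state T) : rel (bool * T) := fun n m => pnode s n == Some m.
Definition desc (s : state T) (n a : bool * T) := connect (prel s) n a.
Definition pdesc (s : state T) (n a : bool * T) := (n != a) && desc s n a.

Definition onpath (s : state T) (bx by_ : T) (n : bool * T) :=
  desc s (true, by_) n && desc s n (true, bx).

Definition merge_lab (s : state T) bx by_ : T -> lbl := fun w =>
  if (lab s w == Odd) && onpath s bx by_ (false, w) then Even else lab s w.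
Definition merge_base (s : state T) bx by_ : T -> T := fun w =>
  if (lab s w == Odd) && onpath s bx by_ (false, w) then bx
  else if (lab s w == Even) && onpath s bx by_ (true, base s w) then bx
  else base s w.

Definition init : state T :=
  State (fun _ => Out) id (fun _ => None) [::] [set f | free f] set0 set0 None.

Inductive kind := KOuterSkip | KOuterRoot | KCall | KReturn | KAugment
                | KGrow | KBlossom | KNothing.

Inductive step : kind -> state T -> state T -> Prop :=
| st_skip s f :
    stk s = [::] -> f \in todo s -> f \in cpf s ->
    step KOuterSkip s
      (State (lab s) (base s) (par s) [::] (todo s :\ f) (cpf s) (dn s) (cur s))
| st_root s f :
    stk s = [::] -> f \in todo s -> f \notin cpf s ->
    step KOuterRoot s
      (State (upd (lab s) f Even) (upd (base s) f f) (upd (par s) f None)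
             [:: FCall f] (todo s :\ f) (cpf s) (dn s) (Some f))
| st_call s v st :
    stk s = FCall v :: st ->
    step KCall s
      (State (lab s) (base s) (par s) (FScan v set0 :: st) (todo s) (cpf s) (dn s) (cur s))
| st_return s v sc st :
    stk s = FScan v sc :: st -> (forall y, nonmatch v y -> y \in sc) ->
    step KReturn s
      (State (lab s) (base s) (par s) st (todo s) (cpf s) (v |: dn s) (cur s))
| st_augment s v sc st y :
    stk s = FScan v sc :: st -> nonmatch v y -> y \notin sc ->
    lab s y = Out -> free y ->
    step KAugment s
      (State (upd (lab s) y Odd) (base s) (upd (par s) y (Some v)) [::] (todo s)
             (y |: oapp (fun r => r |: cpf s) (cpf s) (cur s)) (dn s) (cur s))
| st_grow s v sc st y y' :
    stk s = FScan v sc :: st -> nonmatch v y -> y \notin sc ->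
    lab s y = Out -> mate y = Some y' ->
    step KGrow s
      (State (upd (upd (lab s) y Odd) y' Even) (upd (base s) y' y')
             (upd (upd (par s) y (Some v)) y' (Some y))
             (FCall y' :: FScan v (y |: sc) :: st) (todo s) (cpf s) (dn s) (cur s))
| st_blossom s v sc st y (us : seq T) :
    stk s = FScan v sc :: st -> nonmatch v y -> y \notin sc ->
    lab s y = Even -> pdesc s (true, base s y) (true, base s v) ->
    (* us = u_1, ..., u_k : the odd vertices on the path, u_1 closest to b(x) *)
    perm_eq us [seq u <- enum T | (lab s u == Odd) &&
                                   onpath s (base s v) (base s y) (false, u)] ->
    sorted (fun u w => pdesc s (false, w) (false, u)) us ->
    step KBlossom s
      (State (merge_lab s (base s v) (base s y)) (merge_base s (base s v) (base s y))
             (par s) ([seq FCall u | u <- us] ++ FScan v (y |: sc) :: st)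
             (todo s) (cpf s) (dn s) (cur s))
| st_nothing s v sc st y :
    stk s = FScan v sc :: st -> nonmatch v y -> y \notin sc ->
    lab s y != Out ->
    ~~ ((lab s y == Even) && pdesc s (true, base s y) (true, base s v)) ->
    step KNothing s
      (State (lab s) (base s) (par s) (FScan v (y |: sc) :: st)
             (todo s) (cpf s) (dn s) (cur s)).

Inductive steps : state T -> state T -> Prop :=
| steps_refl s : steps s s
| steps_cons s1 k s2 s3 : step k s1 s2 -> steps s2 s3 -> steps s1 s3.

Definition reachable (s : state T) := steps init s.

Definition same_blossom (s : state T) (x y : T) :=
  (lab s x == Even) && (lab s y == Even) && (base s x == base s y).

End Algo.

From HB Require Import structures.
From mathcomp Require Import all_boot.
Set Implicit Arguments. Unset Strict Implicit. Unset Printing Implicit Defensive.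

(* Two invariants of the search carry the argument: every even vertex below a
   completely scanned blossom base is completely scanned, and every even vertex
   below a base [z] whose call is still on the stack is [z], completely scanned,
   or has its call above [z] on the stack (returning from [z] turns the second
   invariant into the first). When the mate [t'] of [t] is completely scanned, the
   blossom of [t'], the only child of [t], heads a completely scanned subtree, so
   every node on the tree path from [s] up to [t], [t] excluded, is completely
   scanned. Later steps preserve this, a blossom step contracting the path from
   b(y) up to b(x) onto b(x). When such a step makes [s] even, [s] is on that path;
   as [x] is still being scanned, the blossom of [x] is not completely scanned, so
   it is not strictly below [t]: the node of [t] is on the path as well. *)

Section PartialFunctionPaths.
Variables (N : finType) (g : N -> option N).

Definition pfrel : rel N := fun n m => g n == Some m.

Lemma connect_pfrel_next n m a :
  connect pfrel n a -> n != a -> g n = Some m -> connect pfrel m a.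
Proof.
move=> /connectP [[|k p] /= Hp ->]; first by rewrite eqxx.
by case/andP: Hp => /eqP -> Hp _ [<-]; apply/connectP; exists p.
Qed.

Lemma connect_pfrel_total n a b :
  connect pfrel n a -> connect pfrel n b -> connect pfrel a b \/ connect pfrel b a.
Proof.
move=> /connectP [p Hp ->]; elim: p n Hp => [|k p IH] n /=; first by left.
case/andP=> /eqP gn Hp nb; have [<-|n_b] := eqVneq n b.
  by right; apply/connectP; exists (k :: p) => //=; rewrite /pfrel gn eqxx.
exact: IH Hp (connect_pfrel_next nb n_b gn).
Qed.

Lemma connect_pfrel_last n a :
  connect pfrel n a -> n != a -> exists2 c, connect pfrel n c & g c = Some a.
Proof.
move=> /connectP [p Hp ->]; elim: p n Hp => [|k p IH] n /=; first by rewrite eqxx.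
case/andP=> /eqP gn Hp _; have [E|k_last] := eqVneq k (last k p).
  by exists n; rewrite ?connect0 // gn -E.
have [c kc gc] := IH k Hp k_last; exists c => //.
by apply: connect_trans kc; apply: connect1; rewrite /pfrel gn.
Qed.

Lemma connect_pfrel_root n a : connect pfrel n a -> g n = None -> a = n.
Proof. by move=> /connectP [[|k p] //= /andP [/eqP -> _] _]. Qed.

End PartialFunctionPaths.

Section ConnectOn.
Variables (N : finType) (r r' : rel N) (P : pred N).
Hypothesis r_closed : forall n m, P n -> r n m -> P m.

Lemma connect_closed_on n m : P n -> connect r n m -> P m.
Proof.
move=> Pn /connectP [p Hp ->]; elim: p n Pn Hp => //= k p IH n Pn /andP [nk Hp].
exact: IH (r_closed Pn nk) Hp.
Qed.

Lemma connect_map_on (f : N -> N) :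
    (forall n m, P n -> r n m -> f n = f m \/ r' (f n) (f m)) ->
  forall n m, P n -> connect r n m -> connect r' (f n) (f m).
Proof.
move=> f_r n m Pn /connectP [p Hp ->]; elim: p n Pn Hp => [|k p IH] n Pn /=.
  by rewrite connect0.
case/andP=> nk Hp; have := IH k (r_closed Pn nk) Hp.
by case: (f_r n k Pn nk) => [-> //|fnk]; apply: connect_trans (connect1 fnk).
Qed.

Lemma connect_lift_on (f : N -> N) :
    (forall n k, P n -> r' (f n) k -> exists2 n', connect r n n' & f n' = k) ->
  forall n m', P n -> connect r' (f n) m' -> exists2 m, connect r n m & f m = m'.
Proof.
move=> f_r n m' Pn /connectP [p Hp ->]; elim: p n Pn Hp => [|k p IH] n Pn /=.
  by exists n; rewrite ?connect0.
case/andP=> fnk Hp; have [n' nn' fn'] := f_r n k Pn fnk; rewrite -fn' in Hp *.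
have [m n'm <-] := IH n' (connect_closed_on Pn nn') Hp.
by exists m => //; apply: connect_trans n'm.
Qed.

End ConnectOn.

Lemma eq_connect_on (N : finType) (r r' : rel N) (P : pred N) :
    (forall n m, P n -> r n m -> P m) -> (forall n, P n -> r n =1 r' n) ->
  forall n, P n -> connect r n =1 connect r' n.
Proof.
move=> r_closed rr' n Pn m.
have r'_closed n1 m1 : P n1 -> r' n1 m1 -> P m1.
  by move=> Pn1; rewrite -rr' //; apply: r_closed.
apply/idP/idP; first apply: (@connect_map_on _ _ _ P r_closed id) => // n1 m1 Pn1.
- by rewrite rr' //; right.
apply: (@connect_map_on _ _ _ P r'_closed id) => // n1 m1 Pn1.
by rewrite -rr' //; right.
Qed.

Lemma split_cat_cons (X : eqType) (pre post A B : seq X) z :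
    pre ++ z :: post = A ++ B ->
  z \in A \/ exists2 pre', pre = A ++ pre' & B = pre' ++ z :: post.
Proof.
elim: A pre => [|a A IH] pre /=; first by move=> <-; right; exists pre.
case: pre => [|p pre] /= [<- E]; first by left; rewrite inE eqxx.
case: (IH pre E) => [zA|[pre' -> ->]]; first by left; rewrite inE zA orbT.
by right; exists pre'.
Qed.

Section Search.
Variables (T : finType) (mate : T -> option T).

Definition frame_vtx (f : frame T) : T := match f with FCall v | FScan v _ => v end.
Definition stack_vtx (s : state T) : seq T := map frame_vtx (stk s).

Definition is_node (s : state T) (n : bool * T) :=
  if n.1 then (lab s n.2 == Even) && (base s n.2 == n.2) else lab s n.2 == Odd.

Record forest_inv (s : state T) : Prop := ForestInv {
  base_even : forall x, lab s x = Even ->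
    lab s (base s x) = Even /\ base s (base s x) = base s x;
  par_in : forall x p, par s x = Some p -> lab s x != Out /\ lab s p != Out;
  mate_out : forall x x', mate x = Some x' -> (lab s x == Out) = (lab s x' == Out);
  odd_mate : forall x x', lab s x = Odd -> mate x = Some x' -> par s x' = Some x;
  even_child_base : forall x p, lab s x = Even -> par s x = Some p -> lab s p = Odd ->
    base s x = x;
  odd_parent_mate : forall z p, par s z = Some p -> lab s p = Odd -> mate p = Some z;
  odd_parent_even : forall x p, lab s x = Odd -> par s x = Some p -> lab s p = Even
}.

Lemma node_of_odd (s : state T) x : lab s x = Odd -> node_of s x = (false, x).
Proof. by rewrite /node_of => ->. Qed.

Lemma node_of_even (s : state T) x : lab s x = Even -> node_of s x = (true, base s x).
Proof. by rewrite /node_of => ->. Qed.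

Lemma is_node_in (s : state T) n : is_node s n -> lab s n.2 != Out.
Proof. by rewrite /is_node; case: n.1 => [/andP [/eqP ->]|/eqP ->]. Qed.

Lemma neq_out (s : state T) x y : lab s x != Out -> lab s y = Out -> (x == y) = false.
Proof. by move=> x_in y_out; apply: contraNF x_in => /eqP ->; rewrite y_out. Qed.

Section OneForest.
Variable s : state T.
Hypothesis I : forest_inv s.

Lemma is_node_node_of x : lab s x != Out -> is_node s (node_of s x).
Proof.
rewrite /is_node /node_of; case: (lab s x =P Odd) => [->|] //.
case E: (lab s x) => // _ _; by case: (base_even I E) => /= -> ->; rewrite !eqxx.
Qed.

Lemma prel_is_node n m : prel s n m -> is_node s m.
Proof.
rewrite /prel /pnode; case E: (par s n.2) => [p|] //= /eqP [<-].
by apply: is_node_node_of; case: (par_in I E).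
Qed.

Lemma desc_is_node n m : is_node s n -> desc s n m -> is_node s m.
Proof. by apply: connect_closed_on => n1 m1 _; apply: prel_is_node. Qed.

Lemma desc_in x m : lab s x != Out -> desc s (node_of s x) m -> lab s m.2 != Out.
Proof. by move=> /is_node_node_of xn /(desc_is_node xn) /is_node_in. Qed.

End OneForest.

Record extends (s s' : state T) : Prop := Extends {
  ext_old : forall x, lab s x != Out ->
    [/\ lab s' x = lab s x, base s' x = base s x & par s' x = par s x];
  ext_new : forall w, lab s w = Out -> lab s' w = Even -> base s' w = w
}.

Section Extension.
Variables s s' : state T.
Hypothesis I : forest_inv s.
Hypothesis E : extends s s'.

Lemma node_of_ext x : lab s x != Out -> node_of s' x = node_of s x.
Proof. by move=> /(ext_old E) [l b _]; rewrite /node_of l b. Qed.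

Lemma prel_ext n : is_node s n -> prel s n =1 prel s' n.
Proof.
move=> /is_node_in n_in m; rewrite /prel /pnode.
have [_ _ ->] := ext_old E n_in; case P: (par s n.2) => [p|] //=.
by rewrite node_of_ext //; case: (par_in I P).
Qed.

Lemma desc_ext n m : is_node s n -> desc s' n m = desc s n m.
Proof.
move=> n_node; symmetry; apply: (eq_connect_on _ prel_ext) n_node m.
by move=> n1 m1 _; apply: prel_is_node.
Qed.

Lemma desc_node_of_ext x m :
  lab s x != Out -> desc s' (node_of s' x) m = desc s (node_of s x) m.
Proof. by move=> x_in; rewrite node_of_ext // desc_ext // is_node_node_of. Qed.

Hypothesis new_par : forall x p, lab s x = Out -> par s' x = Some p ->
  [/\ lab s' x != Out, lab s' p != Out, lab s' p = Odd -> mate p = Some x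
    & lab s' x = Odd -> lab s' p = Even].
Hypothesis new_mate : forall x x', lab s x = Out -> lab s x' = Out ->
  mate x = Some x' -> (lab s' x == Out) = (lab s' x' == Out).
Hypothesis new_odd_mate : forall x x', lab s x = Out -> lab s' x = Odd ->
  mate x = Some x' -> par s' x' = Some x.

Lemma extends_forest_inv : forest_inv s'.
Proof.
have old_par x p : lab s x != Out -> par s' x = Some p ->
    [/\ lab s' x = lab s x, lab s' p = lab s p & par s x = Some p].
  move=> /(ext_old E) [-> _ ->] P; split=> //.
  by case: (par_in I P) => _ /(ext_old E) [].
split.
- move=> x; case: (lab s x =P Out) => [xo x_even|/eqP /(ext_old E) [-> -> _]].
    by rewrite !(ext_new E xo x_even).
  move=> /(base_even I) [bx_even bxx]; have /(ext_old E) [-> -> _] : lab s (base s x) != Out.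
    by rewrite bx_even.
  by rewrite bxx.
- move=> x p; case: (lab s x =P Out) => [xo /(new_par xo) []//|/eqP xi /(old_par _ _ xi)].
  by case=> -> -> /(par_in I).
- move=> x x' xx'; have := mate_out I xx'.
  case: (lab s x =P Out) => [xo|/eqP xi]; case: (lab s x' =P Out) => [x'o|/eqP x'i].
  + by move=> _; apply: new_mate.
  + by [].
  + by [].
  have [-> _ _] := ext_old E xi; have [-> _ _] := ext_old E x'i.
  by rewrite (negbTE xi) (negbTE x'i).
- move=> x x'; case: (lab s x =P Out) => [xo x_odd|/eqP xi]; first exact: new_odd_mate.
  have [-> _ _] := ext_old E xi => /(odd_mate I) /[apply] P.
  by case: (par_in I P) => /(ext_old E) [_ _ ->].
- move=> x p; case: (lab s x =P Out) => [xo x_even _ _|/eqP xi x_even]; first exact: (ext_new E).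
  move=> /(old_par _ _ xi) [lx -> P] p_odd; have [_ -> _] := ext_old E xi.
  by apply: (even_child_base I) P p_odd; rewrite -lx.
- move=> z p; case: (lab s z =P Out) => [zo /(new_par zo) []//|/eqP zi].
  by move=> /(old_par _ _ zi) [_ -> P]; apply: (odd_parent_mate I).
- move=> x p; case: (lab s x =P Out) => [xo x_odd /(new_par xo) [_ _ _ ->]//|/eqP xi].
  by move=> x_odd /(old_par _ _ xi) [lx -> P]; apply: (odd_parent_even I) P; rewrite -lx.
Qed.

End Extension.

Definition scanned_node (s : state T) (m : bool * T) :=
  forall w, lab s w = Even -> node_of s w = m -> w \in dn s.

Record scan_inv (s : state T) : Prop := ScanInv {
  stack_uniq : uniq (stack_vtx s);
  stack_even : forall z, z \in stack_vtx s -> lab s z = Even /\ z \notin dn s;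
  scanned_even : forall x, x \in dn s -> lab s x = Even;
  todo_free : forall f, f \in todo s -> free mate f /\ (f \notin cpf s -> lab s f = Out);
  scanned_subtree : forall x, base s x = x -> x \in dn s ->
    forall w, lab s w = Even -> desc s (node_of s w) (true, x) -> w \in dn s;
  (* [pre] lists the calls made after that of [z], which are still on the stack. *)
  stack_subtree : forall pre z post, stack_vtx s = pre ++ z :: post -> base s z = z ->
    forall w, lab s w = Even -> desc s (node_of s w) (true, z) ->
    [\/ w = z, w \in dn s | w \in pre]
}.

Lemma stack_top_even (s : state T) v sc st :
  scan_inv s -> stk s = FScan v sc :: st -> lab s v = Even /\ v \notin dn s.
Proof. by move=> J s_stk; apply: (stack_even J); rewrite /stack_vtx s_stk inE eqxx. Qed.

(* [m] ranges over the ancestors of [o] strictly below the node of [t]. *)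
Definition scanned_path (s : state T) (o t : T) := lab s o = Odd ->
  desc s (false, o) (node_of s t) /\
  forall m, desc s (false, o) m -> ~~ desc s (node_of s t) m -> scanned_node s m.

Lemma scanned_path_ext (s s' : state T) o t :
    forest_inv s -> extends s s' -> dn s \subset dn s' ->
    lab s o != Out -> lab s t != Out ->
  scanned_path s o t -> scanned_path s' o t.
Proof.
move=> I E dn_sub o_in t_in Pst; have [lo _ _] := ext_old E o_in.
move=> /[!lo] o_odd; have [ot sc] := Pst o_odd.
have o_node : is_node s (false, o) by rewrite /is_node o_odd.
rewrite (node_of_ext E) // (desc_ext I E) //; split=> // m.
rewrite (desc_ext I E) // (desc_ext I E) ?is_node_node_of // => om tm w w_even wm.
case: (lab s w =P Out) => [w_out|/eqP w_in].
  move: (desc_is_node I o_node om) => /is_node_in.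
  by rewrite -wm /node_of w_even (ext_new E w_out w_even) /= w_out.
have [lw _ _] := ext_old E w_in; apply: (subsetP dn_sub); apply: (sc m om tm).
  by rewrite -lw.
by rewrite -(node_of_ext E w_in).
Qed.

Lemma extends_same (s s' : state T) :
  lab s' = lab s -> base s' = base s -> par s' = par s -> extends s s'.
Proof. by move=> l b p; split=> [x|w]; rewrite l ?b ?p // => ->. Qed.

Lemma forest_inv_same (s s' : state T) :
  lab s' = lab s -> base s' = base s -> par s' = par s -> forest_inv s -> forest_inv s'.
Proof. by case: s' => /= l b p ? ? ? ? ? -> -> ->; case; split. Qed.

Lemma scan_inv_same (s s' : state T) :
    lab s' = lab s -> base s' = base s -> par s' = par s ->
    stack_vtx s' = stack_vtx s -> todo s' \subset todo s -> cpf s' = cpf s ->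
    dn s' = dn s ->
  scan_inv s -> scan_inv s'.
Proof.
case: s' => /= l b p st td cp d c -> -> -> st_eq td_sub -> ->.
rewrite /stack_vtx /= in st_eq.
case=> uq ev sev tf sub ssub; split; rewrite /stack_vtx /= ?st_eq //.
by move=> f /(subsetP td_sub) /tf.
Qed.

Section ReturnStep.
Variables (s : state T) (v : T) (sc : {set T}) (st : seq (frame T)).
Hypotheses (J : scan_inv s) (s_stk : stk s = FScan v sc :: st).

Lemma return_scan_inv :
  scan_inv (State (lab s) (base s) (par s) st (todo s) (cpf s) (v |: dn s) (cur s)).
Proof.
have [v_even v_dn] := stack_top_even J s_stk.
case: J; rewrite /stack_vtx s_stk /= => /andP [v_st uq] ev sev tf sub ssub.
split; rewrite /stack_vtx //=.
- move=> z z_st; have [-> z_dn] : lab s z = Even /\ z \notin dn s.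
    by apply: ev; rewrite inE z_st orbT.
  split=> //.
  by rewrite in_setU1 negb_or z_dn andbT; apply: contraNneq v_st => <-.
- by move=> x; rewrite in_setU1 => /predU1P [->|/sev].
- move=> x bx; rewrite in_setU1 => /predU1P [xv|x_dn] w w_even wx; last first.
    by rewrite in_setU1 (sub x bx x_dn w w_even wx) orbT.
  subst x; case: (ssub [::] v _ erefl bx w w_even wx) => [->|w_dn|//].
    exact: setU11.
  by rewrite in_setU1 w_dn orbT.
- move=> pre z post st_eq bz w w_even wz.
  have [->|w_dn|] := ssub (v :: pre) z post (congr1 (cons v) st_eq) bz w w_even wz.
  + by constructor 1.
  + by constructor 2; rewrite in_setU1 w_dn orbT.
  by rewrite inE => /predU1P [->|w_pre]; [constructor 2; rewrite setU11|constructor 3].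
Qed.

End ReturnStep.

Hypothesis mate_sym : forall x y, mate x = Some y -> mate y = Some x.

Section RootStep.
Variables (s : state T) (f : T).
Hypotheses (I : forest_inv s) (J : scan_inv s).
Hypotheses (f_todo : f \in todo s) (f_cp : f \notin cpf s).
Let s' := State (upd (lab s) f Even) (upd (base s) f f) (upd (par s) f None)
             [:: FCall f] (todo s :\ f) (cpf s) (dn s) (Some f).

Lemma root_out : lab s f = Out.
Proof. exact: (todo_free J f_todo).2. Qed.

Lemma root_extends : extends s s'.
Proof.
split=> [x x_in|w w_out]; rewrite /= /upd; first by rewrite (neq_out x_in root_out).
by case: eqP => // _; rewrite w_out.
Qed.

Lemma root_forest_inv : forest_inv s'.
Proof.
have f_free : mate f = None by apply/eqP; case: (todo_free J f_todo).
apply: (extends_forest_inv I root_extends) => /= [x p x_out|x x' x_out x'_out xx'|x x' x_out].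
- by rewrite /upd; case: eqP => // _ /(par_in I) []; rewrite x_out.
- rewrite /upd; case: (x =P f) => [fx|_]; first by rewrite fx f_free in xx'.
  case: (x' =P f) => [fx'|_]; last by rewrite x_out x'_out.
  by move: (mate_sym xx'); rewrite fx' f_free.
by rewrite /upd; case: eqP => // _; rewrite x_out.
Qed.

Lemma root_scan_inv : scan_inv s'.
Proof.
have f_dn : f \notin dn s by apply/negP => /(scanned_even J); rewrite root_out.
have new_ne x : lab s x != Out -> (x == f) = false by move/neq_out; apply; apply: root_out.
split; rewrite /stack_vtx /= /upd //.
- by move=> z; rewrite inE => /eqP ->; rewrite eqxx; split.
- by move=> x x_dn; have x_even := scanned_even J x_dn; rewrite new_ne ?x_even.
- by move=> g; rewrite in_setD1 => /andP [/negbTE -> /(todo_free J)].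
- move=> x + x_dn; have x_even := scanned_even J x_dn; rewrite new_ne ?x_even // => bx w.
  case: (w =P f) => [-> _ d|/eqP wf w_even].
    have := connect_pfrel_root (g := pnode s') d.
    rewrite /pnode /node_of /= /upd !eqxx => /(_ erefl) [xf].
    by rewrite xf root_out in x_even.
  have w_in : lab s w != Out by rewrite w_even.
  by rewrite (desc_node_of_ext I root_extends) //; apply: (scanned_subtree J).
move=> [|a pre] z post /= [zf]; last by case: pre.
move=> _ _ w; case: (w =P f) => [->|/eqP wf w_even]; first by constructor.
have w_in : lab s w != Out by rewrite w_even.
by rewrite (desc_node_of_ext I root_extends) // -zf => /(desc_in I w_in); rewrite root_out eqxx.
Qed.

End RootStep.

Section AugmentStep.
Variables (s : state T) (v : T) (sc : {set T}) (st : seq (frame T)) (y : T) (cp : {set T}).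
Hypotheses (I : forest_inv s) (J : scan_inv s) (s_stk : stk s = FScan v sc :: st).
Hypotheses (y_out : lab s y = Out) (y_free : free mate y).
Hypotheses (cp_sub : cpf s \subset cp) (y_cp : y \in cp).
Let s' := State (upd (lab s) y Odd) (base s) (upd (par s) y (Some v))
             [::] (todo s) cp (dn s) (cur s).

Lemma augment_extends : extends s s'.
Proof.
split=> [x x_in|w w_out]; rewrite /= /upd; first by rewrite (neq_out x_in y_out).
by case: eqP => // _; rewrite w_out.
Qed.

Lemma augment_forest_inv : forest_inv s'.
Proof.
have [v_even _] := stack_top_even J s_stk.
have vy : (v == y) = false by apply: neq_out y_out; rewrite v_even.
apply: (extends_forest_inv I augment_extends) => /= [x p x_out|x x' x_out x'_out xx'|x x' x_out].
- rewrite /upd; case: eqP => [_ [<-]|_ /(par_in I) []]; last by rewrite x_out.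
  by rewrite vy v_even.
- rewrite /upd; case: (x =P y) => [xy|_]; first by rewrite xy (eqP y_free) in xx'.
  case: (x' =P y) => [x'y|_]; last by rewrite x_out x'_out.
  by move: (mate_sym xx'); rewrite x'y (eqP y_free).
by rewrite /upd; case: eqP => [->|_]; [rewrite (eqP y_free)|rewrite x_out].
Qed.

Lemma augment_scan_inv : scan_inv s'.
Proof.
have old_ne x : lab s x != Out -> (x == y) = false by move/neq_out; apply.
split; rewrite /stack_vtx /= /upd //; last by case.
- by move=> x x_dn; have x_even := scanned_even J x_dn; rewrite old_ne ?x_even.
- move=> g /(todo_free J) [g_free g_out]; split=> // g_cp.
  rewrite (g_out (contra (subsetP cp_sub g) g_cp)).
  by case: (g =P y) => // gy; rewrite gy y_cp in g_cp.
move=> x bx x_dn w; case: (w =P y) => // /eqP wy w_even.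
have w_in : lab s w != Out by rewrite w_even.
by rewrite (desc_node_of_ext I augment_extends) //; apply: (scanned_subtree J).
Qed.

End AugmentStep.

Hypothesis mate_irr : forall x, mate x != Some x.

Section GrowStep.
Variables (s : state T) (v : T) (sc : {set T}) (st : seq (frame T)) (y y' : T).
Hypotheses (I : forest_inv s) (J : scan_inv s) (s_stk : stk s = FScan v sc :: st).
Hypotheses (y_out : lab s y = Out) (yy' : mate y = Some y').
Let s' := State (upd (upd (lab s) y Odd) y' Even) (upd (base s) y' y')
             (upd (upd (par s) y (Some v)) y' (Some y))
             (FCall y' :: FScan v (y |: sc) :: st) (todo s) (cpf s) (dn s) (cur s).

Lemma grow_mate_out : lab s y' = Out.
Proof. by have := mate_out I yy'; rewrite y_out eqxx => /esym/eqP. Qed.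

Lemma grow_neq : (y' == y) = false.
Proof. by apply/eqP => y'y; move: (mate_irr y); rewrite yy' y'y eqxx. Qed.

Lemma grow_old_neq x : lab s x != Out -> (x == y) = false /\ (x == y') = false.
Proof. by move=> x_in; rewrite (neq_out x_in y_out) (neq_out x_in grow_mate_out). Qed.

Lemma grow_extends : extends s s'.
Proof.
split=> [x /grow_old_neq [xy xy']|w w_out]; rewrite /= /upd ?xy ?xy' //.
case: (w =P y') => [-> //|_]; by case: eqP => // _; rewrite w_out.
Qed.

Lemma grow_forest_inv : forest_inv s'.
Proof.
have [v_even _] := stack_top_even J s_stk.
have [vy vy'] : (v == y) = false /\ (v == y') = false by apply: grow_old_neq; rewrite v_even.
have y'y := grow_neq; have y_y' : (y == y') = false by rewrite eq_sym.
apply: (extends_forest_inv I grow_extends) => /= [x p x_out|x x' x_out x'_out xx'|x x'].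
- rewrite /upd; case: (x =P y') => [-> [<-]|_]; first by rewrite y_y' eqxx yy'; split.
  case: (x =P y) => [_ [<-]|_ /(par_in I) []]; last by rewrite x_out.
  by rewrite vy vy' v_even; split.
- rewrite /upd; case: (x =P y') => [xy'|nxy'].
    by move: (mate_sym yy'); rewrite -{1}xy' xx' => -[->]; rewrite y_y' eqxx.
  case: (x =P y) => [xy|nxy]; first by move: xx'; rewrite xy yy' => -[<-]; rewrite eqxx.
  have [x'y'|_] := x' =P y'.
    by move: (mate_sym xx'); rewrite x'y' (mate_sym yy') => -[/esym].
  have [x'y|_] := x' =P y; last by rewrite x_out x'_out.
  by move: (mate_sym xx'); rewrite x'y yy' => -[/esym].
rewrite /upd => x_out; case: (x =P y') => // _; case: (x =P y) => [->|_]; last by rewrite x_out.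
by rewrite yy' => _ [<-]; rewrite eqxx.
Qed.

Lemma grow_stack : stack_vtx s' = y' :: stack_vtx s.
Proof. by rewrite /stack_vtx s_stk. Qed.

Lemma grow_desc_fresh a : desc s' (node_of s' y') a -> a != (true, y') -> a != (false, y) ->
  desc s (node_of s v) a.
Proof.
have v_in : lab s v != Out by rewrite (stack_top_even J s_stk).1.
have [vy vy'] := grow_old_neq v_in.
have p_y' : pnode s' (true, y') = Some (false, y).
  by rewrite /pnode /node_of /= /upd eqxx /= (eq_sym y y') grow_neq !eqxx.
have p_y : pnode s' (false, y) = Some (node_of s' v).
  by rewrite /pnode /= /upd (eq_sym y y') grow_neq eqxx.
rewrite /node_of /= /upd eqxx => d ay' ay.
rewrite -(desc_node_of_ext I grow_extends) //.
apply: (connect_pfrel_next (g := pnode s')) p_y; last by rewrite eq_sym.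
by apply: (connect_pfrel_next (g := pnode s')) d _ p_y'; rewrite eq_sym.
Qed.

Lemma grow_even_old w : lab s' w = Even -> w != y' -> lab s w = Even.
Proof. by rewrite /s' /= /upd => + /negbTE wy'; rewrite wy'; case: (w =P y). Qed.

Lemma grow_scanned_subtree x : base s' x = x -> x \in dn s' ->
  forall w, lab s' w = Even -> desc s' (node_of s' w) (true, x) -> w \in dn s'.
Proof.
move=> bx x_dn w w_even d; have x_even := scanned_even J x_dn.
have [v_even v_dn] := stack_top_even J s_stk.
have [xy xy'] : (x == y) = false /\ (x == y') = false by apply: grow_old_neq; rewrite x_even.
have bx_s : base s x = x by move: bx; rewrite /s' /= /upd xy'.
have [wy'|wy'] := eqVneq w y'.
  have dv : desc s (node_of s v) (true, x).
    apply: grow_desc_fresh; first by rewrite -wy'.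
      by rewrite xpair_eqE xy'.
    by rewrite xpair_eqE.
  by rewrite (scanned_subtree J bx_s x_dn v_even dv) in v_dn.
have w_even_s := grow_even_old w_even wy'.
rewrite (desc_node_of_ext I grow_extends) ?w_even_s // in d.
exact: (scanned_subtree J bx_s x_dn w_even_s d).
Qed.

Lemma grow_stack_subtree pre z post : stack_vtx s' = pre ++ z :: post -> base s' z = z ->
  forall w, lab s' w = Even -> desc s' (node_of s' w) (true, z) ->
  [\/ w = z, w \in dn s' | w \in pre].
Proof.
rewrite grow_stack; case: pre => [|a pre] /= [az st_eq] bz w w_even d.
  have [->|wy'] := eqVneq w y'; first by rewrite az; constructor 1.
  have w_even_s := grow_even_old w_even wy'; have w_in : lab s w != Out by rewrite w_even_s.
  rewrite (desc_node_of_ext I grow_extends) // -az in d.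
  by have := desc_in I w_in d; rewrite grow_mate_out.
have [->|wy'] := eqVneq w y'; first by constructor 3; rewrite inE az eqxx.
have [z_even _] : lab s z = Even /\ z \notin dn s.
  by apply: (stack_even J); rewrite st_eq mem_cat inE eqxx orbT.
have z_in : lab s z != Out by rewrite z_even.
have [_ zy'] := grow_old_neq z_in; rewrite /upd zy' in bz.
have w_even_s := grow_even_old w_even wy'; have w_in : lab s w != Out by rewrite w_even_s.
rewrite (desc_node_of_ext I grow_extends) // in d.
case: (stack_subtree J st_eq bz w_even_s d) => [->|w_dn|w_pre].
- by constructor 1.
- by constructor 2.
by constructor 3; rewrite inE w_pre orbT.
Qed.

Lemma grow_scan_inv : scan_inv s'.
Proof.
have lab_old x : lab s x != Out -> lab s' x = lab s x.
  by case/(ext_old grow_extends).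
split.
- rewrite grow_stack /= (stack_uniq J) andbT; apply/negP => /(stack_even J) [].
  by rewrite grow_mate_out.
- move=> z; rewrite grow_stack inE => /predU1P [->|/(stack_even J) [z_even z_dn]].
    rewrite /= /upd eqxx; split=> //.
    by apply/negP => /(scanned_even J); rewrite grow_mate_out.
  by rewrite lab_old ?z_even.
- by move=> x /(scanned_even J) x_even; rewrite lab_old ?x_even.
- move=> g /(todo_free J) [g_free g_out]; split=> // /g_out g_out'.
  have [gy gy'] : g != y /\ g != y'.
    by split; apply: contraTneq g_free => ->; rewrite /free ?yy' ?(mate_sym yy').
  by rewrite /s' /= /upd (negbTE gy) (negbTE gy').
- exact: grow_scanned_subtree.
exact: grow_stack_subtree.
Qed.

End GrowStep.

Lemma node_of_true (s : state T) x b :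
  lab s x != Out -> node_of s x = (true, b) -> lab s x = Even /\ base s x = b.
Proof. by rewrite /node_of; case: (lab s x) => //= _ []. Qed.

Section BlossomStep.
Variables (s : state T) (v : T) (sc : {set T}) (st : seq (frame T)) (y : T) (us : seq T).
Hypotheses (I : forest_inv s) (J : scan_inv s) (s_stk : stk s = FScan v sc :: st).
Hypothesis path_down : pdesc s (true, base s y) (true, base s v).
Let bx := base s v.
Let by_ := base s y.
Hypothesis us_perm : perm_eq us [seq u <- enum T | (lab s u == Odd) &&
                                   onpath s bx by_ (false, u)].
Let s' := State (merge_lab s bx by_) (merge_base s bx by_) (par s)
             ([seq FCall u | u <- us] ++ FScan v (y |: sc) :: st)
             (todo s) (cpf s) (dn s) (cur s).

Definition merge_node (n : bool * T) := if onpath s bx by_ n then (true, bx) else n.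

Lemma blossom_v_even : lab s v = Even.
Proof. exact: (stack_top_even J s_stk).1. Qed.

Lemma blossom_bx : lab s bx = Even /\ base s bx = bx.
Proof. exact: (base_even I blossom_v_even). Qed.

Lemma blossom_bx_node : is_node s (true, bx).
Proof. by rewrite /is_node /=; case: blossom_bx => -> ->; rewrite !eqxx. Qed.

Lemma onpath_bx : onpath s bx by_ (true, bx).
Proof. by case/andP: path_down => _ d; rewrite /onpath d /desc connect0. Qed.

Lemma merge_node_bx : merge_node (true, bx) = (true, bx).
Proof. by rewrite /merge_node onpath_bx. Qed.

Lemma merge_nodeK n : merge_node (merge_node n) = merge_node n.
Proof.
by rewrite /merge_node; case on: (onpath s bx by_ n); rewrite ?onpath_bx ?on.
Qed.

Lemma merge_node_is_node n : is_node s n -> is_node s (merge_node n).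
Proof. by rewrite /merge_node; case: ifP => // _ _; apply: blossom_bx_node. Qed.

Lemma onpath_up n m : onpath s bx by_ n -> n != (true, bx) -> prel s n m ->
  onpath s bx by_ m.
Proof.
case/andP=> yn nx nbx nm; apply/andP; split; first exact: connect_trans yn (connect1 nm).
exact: (connect_pfrel_next (g := pnode s)) nx nbx (eqP nm).
Qed.

Lemma merge_lab_out x : (lab s' x == Out) = (lab s x == Out).
Proof. by rewrite /= /merge_lab; case: ifP => // /andP [/eqP ->]. Qed.

Lemma node_of_merge x : lab s x != Out -> node_of s' x = merge_node (node_of s x).
Proof.
rewrite /node_of /= /merge_lab /merge_base /merge_node => x_in.
case: (lab s x =P Odd) => [->|x_odd] /=; first by case: (onpath _ _ _ _).
have -> : lab s x = Even by move: x_odd x_in; case: (lab s x).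
by case: (onpath _ _ _ _).
Qed.

Lemma pnode_merge n : pnode s' n = omap merge_node (pnode s n).
Proof.
rewrite /pnode /=; case P: (par s n.2) => [p|] //=.
by rewrite node_of_merge //; case: (par_in I P).
Qed.

Lemma desc_merge n m : is_node s n -> desc s n m -> desc s' (merge_node n) (merge_node m).
Proof.
apply: (connect_map_on (fun n1 m1 _ => prel_is_node I (m := m1))) => n1 m1 _ nm.
have [on|n_off] := boolP (onpath s bx by_ n1); last first.
  by right; rewrite /prel {1}/merge_node (negbTE n_off) pnode_merge (eqP nm).
have [n1bx|nbx] := eqVneq n1 (true, bx).
  by right; rewrite /prel n1bx merge_node_bx pnode_merge -n1bx (eqP nm).
by left; rewrite /merge_node on (onpath_up on nbx nm).
Qed.

Lemma desc_merge_lift n m' : is_node s n -> desc s' (merge_node n) m' ->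
  exists2 m, desc s n m & merge_node m = m'.
Proof.
apply: (connect_lift_on (fun n1 m1 _ => prel_is_node I (m := m1))) => n1 k _.
rewrite /prel pnode_merge.
have [on|n_off] := boolP (onpath s bx by_ n1); last first.
  rewrite [merge_node n1]/merge_node (negbTE n_off); case P: (pnode s n1) => [m|] //= /eqP [<-].
  by exists m => //; apply: connect1; rewrite /prel P.
rewrite [merge_node n1]/merge_node on; case P: (pnode s (true, bx)) => [m|] //= /eqP [<-].
exists m => //; case/andP: on => _ d; apply: connect_trans d (connect1 _).
by rewrite /prel P.
Qed.

Lemma desc_merge_back n m : is_node s n -> desc s' (merge_node n) m -> desc s n m.
Proof.
move=> n_node /(desc_merge_lift n_node) [m0 nm0 <-]; rewrite /merge_node.
by case: ifP => // /andP [_ m0bx]; apply: connect_trans m0bx.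
Qed.

Lemma blossom_bx_unscanned : ~ scanned_node s (true, bx).
Proof.
have [v_even v_dn] := stack_top_even J s_stk.
by move=> /(_ v v_even (node_of_even v_even)); apply/negP.
Qed.

Lemma us_mem u : (u \in us) = (lab s u == Odd) && onpath s bx by_ (false, u).
Proof. by rewrite (perm_mem us_perm) mem_filter mem_enum andbT. Qed.

Lemma us_odd u : u \in us -> lab s u = Odd.
Proof. by rewrite us_mem => /andP [/eqP]. Qed.

Lemma lab_merge x :
  lab s' x = if (lab s x == Odd) && onpath s bx by_ (false, x) then Even else lab s x.
Proof. by []. Qed.

Lemma lab_merge_even x : lab s x = Even -> lab s' x = Even.
Proof. by rewrite lab_merge => ->. Qed.

Lemma lab_merge_odd x : lab s' x = Odd -> lab s x = Odd /\ ~~ onpath s bx by_ (false, x).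
Proof. by rewrite lab_merge; case: (lab s x) => //=; case: (onpath _ _ _ _). Qed.

Lemma lab_merge_evenE x : lab s' x = Even -> lab s x = Even \/ x \in us.
Proof.
rewrite lab_merge us_mem; case: (lab s x) => //=; last by left.
by case: (onpath _ _ _ _) => //; right.
Qed.

Lemma node_of_merge_even x : lab s' x = Even -> merge_node (node_of s x) = (true, base s' x).
Proof.
by move=> x_even; rewrite -node_of_merge ?node_of_even // -merge_lab_out x_even.
Qed.

Lemma merge_base_fixed b : is_node s (true, b) -> merge_node (true, b) = (true, b) ->
  lab s' b = Even /\ base s' b = b.
Proof.
rewrite /is_node /= => /andP [/eqP b_even /eqP bb] fixed.
have b_even' := lab_merge_even b_even; split=> //.
by have := node_of_merge_even b_even'; rewrite node_of_even // bb fixed => -[].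
Qed.

Lemma base_merge_fixed x : lab s x = Even -> base s' x = x -> base s x = x.
Proof.
move=> x_even bx'; have := node_of_merge_even (lab_merge_even x_even).
rewrite bx' node_of_even // /merge_node; case: ifP => [_ [<-]|_ [] //].
exact: blossom_bx.2.
Qed.

Lemma blossom_forest_inv : forest_inv s'.
Proof.
split.
- move=> x x_even; have E := node_of_merge_even x_even.
  apply: merge_base_fixed; rewrite -E ?merge_nodeK //.
  by apply/merge_node_is_node/(is_node_node_of I); rewrite -merge_lab_out x_even.
- by move=> x p /(par_in I); rewrite !merge_lab_out.
- by move=> x x' /(mate_out I); rewrite !merge_lab_out.
- by move=> x x' /lab_merge_odd [x_odd _]; apply: (odd_mate I).
- move=> x p x_even P /lab_merge_odd [p_odd p_off].
  case: (lab_merge_evenE x_even) => [x_even_s|]; last first.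
    by rewrite us_mem => /andP [/eqP /(odd_parent_even I) /(_ P)]; rewrite p_odd.
  have bxx := even_child_base I x_even_s P p_odd.
  have := node_of_merge_even x_even; rewrite node_of_even // bxx /merge_node.
  case: ifP => [on|_] E; last by case: E.
  have <- : bx = base s' x by case: E.
  have [[->] //|nbx] := eqVneq (true, x) (true, bx).
  have xp : prel s (true, x) (false, p) by rewrite /prel /pnode P /= node_of_odd.
  by rewrite (onpath_up on nbx xp) in p_off.
- by move=> z p P /lab_merge_odd [p_odd _]; apply: (odd_parent_mate I).
by move=> x p /lab_merge_odd [x_odd _] P; apply/lab_merge_even/(odd_parent_even I x_odd P).
Qed.

Lemma blossom_stack : stack_vtx s' = us ++ stack_vtx s.
Proof. by rewrite /stack_vtx /= map_cat s_stk; congr (_ ++ _); elim: (us) => //= u l ->. Qed.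

Lemma blossom_scanned_subtree x : base s' x = x -> x \in dn s' ->
  forall w, lab s' w = Even -> desc s' (node_of s' w) (true, x) -> w \in dn s'.
Proof.
move=> bx' x_dn w w_even d; have x_even := scanned_even J x_dn.
have bxx := base_merge_fixed x_even bx'.
case: (lab_merge_evenE w_even) => [w_even_s|w_us].
  rewrite node_of_merge ?w_even_s // in d.
  apply: (scanned_subtree J bxx x_dn w_even_s); apply: desc_merge_back d.
  by apply: (is_node_node_of I); rewrite w_even_s.
have w_on : merge_node (false, w) = merge_node (true, bx).
  by move: w_us; rewrite merge_node_bx us_mem /merge_node => /andP [_ ->].
rewrite node_of_merge ?us_odd // node_of_odd ?us_odd // w_on in d.
have [v_even v_dn] := stack_top_even J s_stk.
have dv := desc_merge_back blossom_bx_node d.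
by rewrite (scanned_subtree J bxx x_dn v_even) ?node_of_even in v_dn.
Qed.

Lemma blossom_stack_subtree pre z post : stack_vtx s' = pre ++ z :: post ->
  base s' z = z -> forall w, lab s' w = Even -> desc s' (node_of s' w) (true, z) ->
  [\/ w = z, w \in dn s' | w \in pre].
Proof.
rewrite blossom_stack => st_eq bz w w_even d.
case: (split_cat_cons (esym st_eq)) => [z_us|[pre' pre_eq st_eq']].
  have z_odd := us_odd z_us.
  have z_even : lab s' z = Even by move: z_us; rewrite lab_merge us_mem => ->.
  have := node_of_merge_even z_even; rewrite node_of_odd // bz /merge_node.
  move: z_us; rewrite us_mem => /andP [_ ->] [zbx].
  by rewrite -zbx blossom_bx.1 in z_odd.
have [z_even _] : lab s z = Even /\ z \notin dn s.
  by apply: (stack_even J); rewrite st_eq' mem_cat inE eqxx orbT.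
have bz_s := base_merge_fixed z_even bz.
case: (lab_merge_evenE w_even) => [w_even_s|w_us]; last first.
  by constructor 3; rewrite pre_eq mem_cat w_us.
have w_in : lab s w != Out by rewrite w_even_s.
rewrite node_of_merge // in d; have d_s := desc_merge_back (is_node_node_of I w_in) d.
case: (stack_subtree J st_eq' bz_s w_even_s d_s) => [->|w_dn|w_pre].
- by constructor 1.
- by constructor 2.
by constructor 3; rewrite pre_eq mem_cat w_pre orbT.
Qed.

Lemma blossom_scan_inv : scan_inv s'.
Proof.
split.
- rewrite blossom_stack cat_uniq (perm_uniq us_perm) filter_uniq ?enum_uniq //.
  rewrite (stack_uniq J) andbT /=.
  apply/hasPn => z /(stack_even J) [z_even _]; apply/negP => /us_odd.
  by rewrite z_even.
- move=> z; rewrite blossom_stack mem_cat.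
  case/orP => [z_us|/(stack_even J) [/lab_merge_even //]].
  split; first by move: z_us; rewrite lab_merge us_mem => ->.
  by apply/negP => /(scanned_even J); rewrite us_odd.
- by move=> x /(scanned_even J) /lab_merge_even.
- move=> f /(todo_free J) [f_free f_out]; split=> // /f_out f_out'.
  by apply/eqP; rewrite merge_lab_out f_out'.
- exact: blossom_scanned_subtree.
exact: blossom_stack_subtree.
Qed.

Lemma scanned_path_blossom o t : lab s o != Out -> lab s t != Out ->
  scanned_path s o t -> scanned_path s' o t.
Proof.
move=> o_in t_in Pst /lab_merge_odd [o_odd o_off]; have [ot scanned] := Pst o_odd.
have o_node : is_node s (false, o) by rewrite /is_node /= o_odd.
have o_fix : merge_node (false, o) = (false, o) by rewrite /merge_node (negbTE o_off).
have t_node := is_node_node_of I t_in.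
rewrite (node_of_merge t_in); split; first by rewrite -o_fix; apply: desc_merge.
move=> m'; rewrite -{1}o_fix => /(desc_merge_lift o_node) [m om <-] tm'.
have tm : ~~ desc s (node_of s t) m.
  by apply: contra tm' => /(desc_merge t_node).
have m_off : ~~ onpath s bx by_ m.
  apply/negP => m_on; apply: blossom_bx_unscanned; case/andP: (m_on) => _ mbx.
  apply: scanned (connect_trans om mbx) _; apply: contra tm' => /(desc_merge t_node).
  by rewrite merge_node_bx /merge_node m_on.
rewrite /merge_node (negbTE m_off) => w w_even wm.
have w_in : lab s w != Out by rewrite -merge_lab_out w_even.
move: wm; rewrite node_of_merge // /merge_node; case: ifP => [_ mbx|_ wm].
  by rewrite -mbx onpath_bx in m_off.
case: (lab_merge_evenE w_even) => [w_even_s|w_us]; first exact: scanned om tm w w_even_s wm.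
have w_odd := us_odd w_us.
by move: w_us m_off; rewrite us_mem -wm node_of_odd // => /andP [_ ->].
Qed.

Lemma blossom_same_blossom o t : lab s o = Odd -> lab s t != Out ->
  scanned_path s o t -> lab s' o = Even -> same_blossom s' o t.
Proof.
move=> o_odd t_in Pst; rewrite lab_merge o_odd /=.
case: ifP => // o_on _; have [ot scanned] := Pst o_odd.
case/andP: (o_on) => yo obx.
have tbx : desc s (node_of s t) (true, bx).
  by apply/negPn/negP => tbx; apply: blossom_bx_unscanned; apply: scanned obx tbx.
have t_on : onpath s bx by_ (node_of s t).
  by rewrite /onpath tbx andbT; apply: connect_trans yo ot.
have o_in' : lab s' o != Out by rewrite merge_lab_out o_odd.
have t_in' : lab s' t != Out by rewrite merge_lab_out.
have [o_even bo] : lab s' o = Even /\ base s' o = bx.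
  by apply: node_of_true o_in' _; rewrite node_of_merge ?o_odd // node_of_odd // /merge_node o_on.
have [t_even bt] : lab s' t = Even /\ base s' t = bx.
  by apply: node_of_true t_in' _; rewrite node_of_merge // /merge_node t_on.
by rewrite /same_blossom o_even t_even bo bt !eqxx.
Qed.

End BlossomStep.

Definition search_inv (s : state T) := forest_inv s /\ scan_inv s.

Definition tracked (s : state T) (o t : T) :=
  [/\ search_inv s, lab s o != Out, lab s t != Out & scanned_path s o t].

Lemma tracked_ext (s s' : state T) o t : search_inv s' -> extends s s' ->
  dn s \subset dn s' -> tracked s o t -> tracked s' o t.
Proof.
move=> inv' E dn_sub [[I _] o_in t_in Pst]; split=> //; last exact: scanned_path_ext Pst.
- by have [-> _ _] := ext_old E o_in.
by have [-> _ _] := ext_old E t_in.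
Qed.

Lemma scanned_path_init (s : state T) t t' o : search_inv s ->
  lab s t = Odd -> mate t = Some t' -> lab s t' = Even -> t' \in dn s ->
  desc s (false, o) (false, t) -> scanned_path s o t.
Proof.
move=> [I J] t_odd tt' t'_even t'_dn ot _; rewrite node_of_odd //.
split=> // m om tm w w_even wm.
have mt : desc s m (false, t).
  by case: (connect_pfrel_total om ot) => // tm'; case/negP: tm.
have m_ne : m != (false, t) by apply: contraNneq tm => ->; apply: connect0.
have [c mc ct] := connect_pfrel_last mt m_ne.
have w_in : lab s w != Out by rewrite w_even.
have c_node : is_node s c by apply: (desc_is_node I _ mc); rewrite -wm is_node_node_of.
(* [c] is the child of [t] on the path: the blossom with base [t']. *)
move: ct; rewrite /pnode; case P: (par s c.2) => [p|] //= pt.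
have pt' : p = t by move: pt; rewrite /node_of; case: ifP => // _ [].
move: P; rewrite pt' => P; move: (odd_parent_mate I P t_odd); rewrite tt' => -[c2].
case: c c2 c_node mc P => [[] _] /= <-; last by rewrite /is_node /= t'_even.
move=> _ wt' P; have bt' := even_child_base I t'_even (odd_mate I t_odd tt') t_odd.
by apply: (scanned_subtree J bt' t'_dn w_even); rewrite wm.
Qed.

Section Steps.
Variable e : rel T.

Lemma search_inv_init : search_inv (init mate).
Proof. by split; split=> //= [x|f]; rewrite inE // => ->. Qed.

Lemma search_inv_step k s s' : step e mate k s s' -> search_inv s -> search_inv s'.
Proof.
case=> {k s s'} [s f s_stk _ _|s f _ f_todo f_cp|s v st s_stk|s v sc st s_stk _
  |s v sc st y s_stk _ _ y_out y_free|s v sc st y y' s_stk _ _ y_out yy'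
  |s v sc st y us s_stk _ _ _ pd us_perm _|s v sc st y s_stk _ _ _ _] [fi si].
- split; first exact: forest_inv_same fi.
  by apply: scan_inv_same si => //; [rewrite /stack_vtx s_stk|apply: subsetDl].
- by split; [apply: root_forest_inv fi si f_todo f_cp|apply: root_scan_inv fi si f_todo f_cp].
- split; first exact: forest_inv_same fi.
  by apply: scan_inv_same si; rewrite ?subxx //; rewrite /stack_vtx s_stk.
- by split; [apply: forest_inv_same fi | apply: return_scan_inv si s_stk].
- split; first exact: augment_forest_inv fi si s_stk y_out y_free.
  apply: augment_scan_inv fi si y_out _ _; last by rewrite !inE eqxx.
  by apply/subsetP => z z_cp; case: (cur s) => [r|] /=; rewrite !inE z_cp !orbT.
- split; first exact: grow_forest_inv fi si s_stk y_out yy'.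
  exact: grow_scan_inv fi si s_stk y_out yy'.
- split; first exact: blossom_forest_inv fi si s_stk pd us_perm.
  exact: blossom_scan_inv fi si s_stk pd us_perm.
split; first exact: forest_inv_same fi.
by apply: scan_inv_same si => //; rewrite /stack_vtx s_stk.
Qed.

Lemma search_inv_steps s s' : steps e mate s s' -> search_inv s -> search_inv s'.
Proof. by elim=> // s1 k s2 s3 st _ IH /(search_inv_step st). Qed.

Lemma tracked_step k s s' o t : step e mate k s s' -> tracked s o t -> tracked s' o t.
Proof.
move=> st tr; have [inv _ _ _] := tr; have inv' := search_inv_step st inv.
case: st inv' tr => {k s s' inv} [s f s_stk _ _|s f _ f_todo f_cp|s v st s_stk|s v sc st s_stk _
  |s v sc st y s_stk _ _ y_out y_free|s v sc st y y' s_stk _ _ y_out yy'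
  |s v sc st y us s_stk _ _ _ pd us_perm _|s v sc st y s_stk _ _ _ _] inv' tr.
- by apply: (tracked_ext inv') tr; [apply: extends_same|apply: subxx].
- have [[_ si] _ _ _] := tr.
  by apply: (tracked_ext inv') tr; [apply: root_extends si f_todo f_cp|apply: subxx].
- by apply: (tracked_ext inv') tr; [apply: extends_same|apply: subxx].
- by apply: (tracked_ext inv') tr; [apply: extends_same|apply: subsetUr].
- by apply: (tracked_ext inv') tr; [apply: augment_extends y_out|apply: subxx].
- have [[fi _] _ _ _] := tr.
  by apply: (tracked_ext inv') tr; [apply: grow_extends fi y_out yy'|apply: subxx].
- have [[fi si] o_in t_in Pst] := tr; split; rewrite ?merge_lab_out //.
  exact: (scanned_path_blossom fi si s_stk pd us_perm o_in t_in Pst).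
by apply: (tracked_ext inv') tr; [apply: extends_same|apply: subxx].
Qed.

Lemma tracked_steps s s' o t : steps e mate s s' -> tracked s o t -> tracked s' o t.
Proof. by elim=> // s1 k s2 s3 st _ IH /(tracked_step st). Qed.

Lemma blossom_step_same_blossom s s' o t : step e mate KBlossom s s' -> tracked s o t ->
  lab s o = Odd -> lab s' o = Even -> same_blossom s' o t.
Proof.
move E: KBlossom => k st; case: st E => // s0 v sc st y us s_stk _ _ _ _ _ _ _.
case=> [[_ si] _ t_in Pst] o_odd.
exact: (blossom_same_blossom (us := us) si s_stk o_odd t_in Pst).
Qed.

End Steps.

End Search.

Theorem lemmaA3 (T : finType) (e : rel T) (mate : T -> option T)
  (e_sym : symmetric e) (e_irr : irreflexive e)
  (mate_sym : forall x y, mate x = Some y -> mate y = Some x)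
  (mate_edge : forall x y, mate x = Some y -> e x y)
  (s1 s2 s3 : state T) (t t' s : T) :
  reachable e mate s1 ->
  lab s1 t = Odd -> mate t = Some t' -> lab s1 t' = Even -> t' \in dn s1 ->
  lab s1 s = Odd -> desc s1 (false, s) (false, t) ->
  steps e mate s1 s2 -> step e mate KBlossom s2 s3 ->
  lab s2 s = Odd -> lab s3 s = Even ->
  same_blossom s3 s t.
Proof.
move=> reach t_odd tt' t'_even t'_dn s_odd st s12 s23 s_odd2 s_even3.
have mate_irr x : mate x != Some x by apply/eqP => /mate_edge; rewrite e_irr.
have inv1 := search_inv_steps mate_sym mate_irr reach (search_inv_init mate).
have tr1 : tracked mate s1 s t.
  split; rewrite ?s_odd ?t_odd //.
  exact: scanned_path_init inv1 t_odd tt' t'_even t'_dn st.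
have tr2 := tracked_steps mate_sym mate_irr s12 tr1.
exact: blossom_step_same_blossom s23 tr2 s_odd2 s_even3.
Qed.
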